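(* Let $r\ge1$ and let $\mathbf{Y}^r$ be the $r$-fold Cartesian product of Young's lattice. For every $n\ge0$, the cokernel of the up map $U_n:\mathbb{Z}^{p_n}\to\mathbb{Z}^{p_{n+1}}$ of $\mathbf{Y}^r$ is a free abelian group.
   Context: Young's lattice $\mathbf{Y}$ is the poset of all integer partitions ordered by inclusion of Young diagrams, graded by size; $\mathbf{Y}^r$ has the componentwise order and rank equal to total size. With $P_n$ the set of rank-$n$ elements and $p_n=|P_n|$, the up map $U_n:\mathbb{Z}^{P_n}\to\mathbb{Z}^{P_{n+1}}$ sends each basis element to the sum of all elements covering it. *)

From mathcomp Require Import all_boot all_order all_algebra.
Set Implicit Arguments. Unset Strict Implicit. Unset Printing Implicit Defensive.
Import GRing.Theory.
Local Open Scope ring_scope.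

(* Candidate r-tuples of partitions of rank n: each component is a
   function 'I_n -> 'I_n.+1, i.e. a sequence of n parts each <= n
   (padded with zeros).  Every partition of size <= n fits. *)
Definition cand (r n : nat) := {ffun 'I_r -> {ffun 'I_n -> 'I_n.+1}}.

Definition entry r n (x : cand r n) (i : 'I_r) (j : nat) : nat :=
  match (insub j : option 'I_n) with Some j' => nat_of_ord (x i j') | None => 0%N end.

Definition is_part r n (x : cand r n) (i : 'I_r) : bool :=
  [forall j : 'I_n, entry x i j.+1 <= entry x i j]%N.

Definition rankY r n (x : cand r n) : nat :=
  (\sum_(i < r) \sum_(j < n) entry x i j)%N.

Definition Pset (r n : nat) : {set cand r n} :=
  [set x | [forall i, is_part x i] && (rankY x == n)].

Definition leY r m n (x : cand r m) (y : cand r n) : bool :=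
  [forall i : 'I_r, forall j : 'I_m, entry x i j <= entry y i j]%N.

Definition coversY r m n (x : cand r m) (y : cand r n) : bool :=
  leY x y && (rankY y == (rankY x).+1).

(* The up map U_n : Z^{P_n} -> Z^{P_{n+1}}, as an integer matrix acting on
   row vectors (v |-> v *m upmap r n); basis of Z^{P_n} indexed by enum of P_n. *)
Definition upmap (r n : nat) : 'M[int]_(#|Pset r n|, #|Pset r n.+1|) :=
  \matrix_(i, j) (coversY (enum_val i) (enum_val j))%:R.

(* The cokernel Z^k / (Z^m *m U) is a free abelian group: it is isomorphic to
   Z^d for some d, i.e. there is a surjective Z-linear map Z^k -> Z^d (given by
   an integer matrix) whose kernel is exactly the image of U. *)
Definition cokernel_free (m k : nat) (U : 'M[int]_(m, k)) : Prop :=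
  exists (d : nat) (M : 'M[int]_(k, d)),
    (forall w : 'rV[int]_d, exists v : 'rV[int]_k, v *m M = w) /\
    (forall v : 'rV[int]_k, v *m M = 0 <-> exists u : 'rV[int]_m, v = u *m U).

From mathcomp Require Import all_boot all_order all_algebra.
From mathcomp Require Import zify.
Set Implicit Arguments. Unset Strict Implicit. Unset Printing Implicit Defensive.
Import GRing.Theory.
Local Open Scope ring_scope.

(* Let phi add one box to the first row of the first partition of a tuple.
   Then phi : P_n -> P_{n+1} is injective, U x has coefficient 1 at phi x, and
   if U x' has a nonzero coefficient at phi x with x' <> x, then the first row
   of x' is longer than that of x.  So the columns of U indexed by phi(P_n)
   form a unitriangular integer matrix; hence U is injective and its image is
   complemented by the coordinate subgroup spanned by P_{n+1} \ phi(P_n). *)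

Section OffRangeColumns.

Variables (R : pzRingType) (m k : nat) (g : 'I_m -> 'I_k).

Definition off_range : {set 'I_k} := [set j | [forall i, j != g i]].

Definition off_range_sel : 'M[R]_(k, #|off_range|) :=
  \matrix_(j, c) (j == enum_val c)%:R.

Lemma mul_off_range_sel p (A : 'M[R]_(p, k)) a c :
  (A *m off_range_sel) a c = A a (enum_val c).
Proof.
rewrite mxE (bigD1 (enum_val c)) //= mxE eqxx mulr1 big1 ?addr0 //.
by move=> j /negbTE nj; rewrite mxE nj mulr0.
Qed.

Lemma off_range_selTK : off_range_sel^T *m off_range_sel = 1%:M.
Proof.
apply/matrixP => c c'; rewrite mul_off_range_sel !mxE (inj_eq enum_val_inj).
by rewrite eq_sym.
Qed.

Lemma off_range_selT_range (w : 'rV[R]_#|off_range|) i :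
  (w *m off_range_sel^T) 0 (g i) = 0.
Proof.
rewrite mxE big1 // => c _; rewrite !mxE.
have /[!inE] /forallP /(_ i) := enum_valP c.
by rewrite eq_sym => /negbTE ->; rewrite mulr0.
Qed.

Lemma off_range_sel_eq0 (x : 'rV[R]_k) :
  (forall i, x 0 (g i) = 0) -> x *m off_range_sel = 0 -> x = 0.
Proof.
move=> xg xS; apply/rowP => j; rewrite mxE.
case jC: (j \in off_range).
  by rewrite -(enum_rankK_in jC jC) -mul_off_range_sel xS mxE.
by move: jC; rewrite inE => /forallPn [i]; rewrite negbK => /eqP ->.
Qed.

End OffRangeColumns.

Section UnitriangularCokernel.

Variables (m k H : nat) (U : 'M[int]_(m, k)) (g : 'I_m -> 'I_k) (h : 'I_m -> nat).
Hypothesis h_lt : forall i, (h i < H)%N.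
Hypothesis U_diag : forall i, U i (g i) = 1.
Hypothesis U_tri : forall i i', i' != i -> U i' (g i) != 0 -> (h i < h i')%N.

Lemma unitri_mulmx_eq0 (u : 'rV[int]_m) :
  (forall i, (u *m U) 0 (g i) = 0) -> u = 0.
Proof.
move=> uU0; apply/rowP => i; rewrite mxE.
suff: forall t i, (H - h i)%N = t -> u 0 i = 0 by apply.
elim/ltn_ind=> t IH {}i Et.
have := uU0 i; rewrite mxE (bigD1 i) //= U_diag mulr1 big1 ?addr0 // => i' ne.
have [->|nz] := eqVneq (U i' (g i)) 0; first by rewrite mulr0.
have := U_tri ne nz; have := h_lt i => hi hi'.
by rewrite (IH _ _ i' erefl) ?mul0r //; lia.
Qed.

Lemma unitri_reduce p (V : 'M[int]_(p, k)) :
  exists R : 'M[int]_(p, m), forall a i, (V - R *m U) a (g i) = 0.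
Proof.
suff /(_ H) [R RP]: forall t, exists R : 'M[int]_(p, m),
    forall a i, (H - t <= h i)%N -> (V - R *m U) a (g i) = 0.
  by exists R => a i; apply: RP; rewrite subnn.
(* Clear the coordinates g i level by level, from the largest h i down. *)
elim=> [|t [R RP]]; first by exists 0 => a i; rewrite subn0 leqNgt h_lt.
pose C : 'M[int]_(p, m) :=
  \matrix_(a, i) (if h i == (H - t.+1)%N then (V - R *m U) a (g i) else 0).
have CU a j : (H - t.+1 <= h j)%N -> (C *m U) a (g j) = C a j.
  move=> hj; rewrite mxE (bigD1 j) //= U_diag mulr1 big1 ?addr0 // => i ne.
  rewrite mxE; case: eqP => [hi|]; last by rewrite mul0r.
  have [->|nz] := eqVneq (U i (g j)) 0; first by rewrite mulr0.
  by have := U_tri ne nz; lia.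
exists (R + C) => a j hj.
have -> : (V - (R + C) *m U) a (g j) = (V - R *m U) a (g j) - C a j.
  by rewrite mulmxDl opprD addrA -CU // !mxE.
rewrite [C a j]mxE; case: eqP => [_|ne]; first by rewrite subrr.
by rewrite RP ?subr0 //; lia.
Qed.

Lemma unitri_cokernel_free : cokernel_free U.
Proof.
have [Q QP] := unitri_reduce 1%:M.
(* W projects onto the coordinates off the range of g, along the image of U. *)
pose W : 'M[int]_k := 1%:M - Q *m U.
have W_g (x : 'rV[int]_k) i : (x *m W) 0 (g i) = 0.
  by rewrite mxE big1 // => j _; rewrite QP mulr0.
have W_fix (x : 'rV[int]_k) : (forall i, x 0 (g i) = 0) -> x *m W = x.
  move=> xg; suff xQ0 : x *m Q = 0.
    by rewrite mulmxBr mulmx1 mulmxA xQ0 mul0mx subr0.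
  apply: unitri_mulmx_eq0 => i; have := W_g x i.
  rewrite mulmxBr mulmx1 mulmxA !mxE xg sub0r.
  by move/eqP; rewrite oppr_eq0 => /eqP.
have W_im (u : 'rV[int]_m) : u *m U *m W = 0.
  suff uUQ : u *m U *m Q = u by rewrite mulmxBr mulmx1 !mulmxA uUQ subrr.
  apply/eqP; rewrite eq_sym -subr_eq0; apply/eqP/unitri_mulmx_eq0 => i.
  by have := W_g (u *m U) i; rewrite mulmxBl mulmxBr mulmx1 !mulmxA.
exists #|off_range g|, (W *m off_range_sel int g); split.
- move=> w; exists (w *m (off_range_sel int g)^T).
  rewrite mulmxA W_fix; last exact: off_range_selT_range.
  by rewrite -mulmxA off_range_selTK mulmx1.
- move=> v; split=> [vWS | [u ->]]; last by rewrite mulmxA W_im mul0mx.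
  exists (v *m Q); apply/eqP; rewrite -subr_eq0 -mulmxA -{1}(mulmx1 v) -mulmxBr.
  by apply/eqP/off_range_sel_eq0; rewrite // -mulmxA.
Qed.

End UnitriangularCokernel.

Local Open Scope nat_scope.

Section YoungTuples.

Variable r : nat.

Lemma entry_ord n (x : cand r n) i (j : 'I_n) : entry x i j = x i j.
Proof. by rewrite /entry valK. Qed.

Lemma entry_le n (x : cand r n) i j : entry x i j <= n.
Proof. by rewrite /entry; case: insub => // j'; rewrite -ltnS ltn_ord. Qed.

Lemma entry_out n (x : cand r n) i j : n <= j -> entry x i j = 0.
Proof. by move=> nj; rewrite /entry insubN // -leqNgt. Qed.

Lemma cand_eq n (x y : cand r n) :
  (forall i (j : 'I_n), entry x i j = entry y i j) -> x = y.
Proof.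
move=> xy; apply/ffunP => i; apply/ffunP => j; apply: val_inj.
by rewrite /= -!entry_ord xy.
Qed.

Lemma is_part_leq n (x : cand r n) i :
  is_part x i -> forall j, entry x i j.+1 <= entry x i j.
Proof.
move=> /forallP xi j; have [jn|nj] := ltnP j n; first exact: (xi (Ordinal jn)).
by rewrite entry_out // ltnW.
Qed.

Lemma eq_of_le_entry_rankY n (x y : cand r n) :
  (forall i (j : 'I_n), entry x i j <= entry y i j) -> rankY x = rankY y -> x = y.
Proof.
move=> xy rxy; apply: cand_eq => i j; apply/eqP.
have [_] := leqif_sum (fun i (_ : predT i) =>
  leqif_sum (fun j (_ : predT j) => leqif_eq (xy i j))).
by rewrite [_ == _](introT eqP rxy) => /esym/forallP/(_ i)/forallP/(_ j).
Qed.

Definition grow_row0 n (i0 : 'I_r) (x : cand r n) : cand r n.+1 :=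
  [ffun i => [ffun j : 'I_n.+1 =>
    inord (entry x i j + ((i == i0) && (j == 0 :> nat)))]].

Lemma entry_grow_row0 n i0 (x : cand r n) i j :
  entry (grow_row0 i0 x) i j = entry x i j + ((i == i0) && (j == 0)).
Proof.
rewrite {1}/entry; case: insubP => [j' jn <-|].
  rewrite !ffunE inordK //; have := entry_le x i j'; case: (_ && _) => /=; lia.
rewrite -leqNgt => nj; rewrite entry_out ?(ltnW nj) //.
have -> : (j == 0) = false by apply/eqP; lia.
by rewrite andbF.
Qed.

Lemma rankY_grow_row0 n i0 (x : cand r n) : rankY (grow_row0 i0 x) = (rankY x).+1.
Proof.
have row_sum i : \sum_(j < n.+1) entry (grow_row0 i0 x) i j
                 = \sum_(j < n) entry x i j + (i == i0).
  under eq_bigr => j _ do rewrite entry_grow_row0.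
  rewrite big_split /= [X in X + _]big_ord_recr /= entry_out // addn0.
  rewrite [X in _ + X]big_ord_recl /= andbT.
  by rewrite [X in _ + (_ + X)]big1 ?addn0 // => j _; rewrite andbF.
rewrite /rankY; under eq_bigr => i _ do rewrite row_sum.
rewrite big_split /= [X in _ + X](bigD1 i0) //= eqxx.
by rewrite [X in _ + (_ + X)]big1 ?addn0 ?addn1 // => i /negbTE ->.
Qed.

Lemma grow_row0_Pset n i0 (x : cand r n) :
  x \in Pset r n -> grow_row0 i0 x \in Pset r n.+1.
Proof.
rewrite !inE rankY_grow_row0 eqSS => /andP[/forallP xpart ->]; rewrite andbT.
apply/forallP => i; apply/forallP => j; rewrite !entry_grow_row0 /= andbF addn0.
by have := is_part_leq (xpart i) j; lia.
Qed.

Lemma coversY_grow_row0 n i0 (x : cand r n) : coversY x (grow_row0 i0 x).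
Proof.
rewrite /coversY rankY_grow_row0 eqxx andbT.
by apply/forallP => i; apply/forallP => j; rewrite entry_grow_row0 leq_addr.
Qed.

Lemma coversY_grow_row0_lt n i0 (x y : cand r n) :
  coversY y (grow_row0 i0 x) -> y != x -> entry x i0 0 < entry y i0 0.
Proof.
rewrite /coversY rankY_grow_row0 eqSS => /andP[/forallP yx /eqP rxy] ne.
rewrite ltnNge; apply: contra ne => y0x0.
apply/eqP/eq_of_le_entry_rankY => // i j.
have /forallP/(_ j) := yx i; rewrite entry_grow_row0.
case: (eqVneq i i0) => [->|_]; last by rewrite addn0.
by case: (posnP j) => [->|_]; rewrite /= ?addn0.
Qed.

End YoungTuples.

Theorem proposition6p5 (r n : nat) : (1 <= r)%N -> cokernel_free (upmap r n).
Proof.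
move=> r_gt0; pose i0 : 'I_r := Ordinal r_gt0.
pose g (i : 'I_#|Pset r n|) : 'I_#|Pset r n.+1| :=
  enum_rank_in (grow_row0_Pset i0 (enum_valP i)) (grow_row0 i0 (enum_val i)).
have gE i : enum_val (g i) = grow_row0 i0 (enum_val i).
  by rewrite enum_rankK_in // grow_row0_Pset // enum_valP.
apply: (@unitri_cokernel_free _ _ n.+1 _ g (fun i => entry (enum_val i) i0 0)).
- by move=> i; rewrite ltnS entry_le.
- by move=> i; rewrite mxE gE coversY_grow_row0.
- move=> i i' ne; rewrite mxE gE; case cov: coversY => // _.
  apply: coversY_grow_row0_lt cov _.
  by apply: contra ne => /eqP/enum_val_inj ->.
Qed.
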